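(* Let $(V,c)$ be a braided vector space, i.e. $V$ a finite-dimensional complex vector space and $c\in GL(V\otimes V)$ satisfying $(c\otimes \mathrm{Id}_V)(\mathrm{Id}_V\otimes c)(c\otimes \mathrm{Id}_V)=(\mathrm{Id}_V\otimes c)(c\otimes \mathrm{Id}_V)(\mathrm{Id}_V\otimes c)$. Then $(V,c)$ is both of left group-type and of right group-type if and only if $(V,c)$ is diagonalizable.
   Context: $(V,c)$ is of left group-type if there are an ordered basis $[x_1,\ldots,x_n]$ of $V$ and $g_i\in GL(V)$ with $c(x_i\otimes z)=g_i(z)\otimes x_i$ for all $i$ and $z\in V$; it is of right group-type if there are an ordered basis $[x_1,\ldots,x_n]$ of $V$ and $g_j\in GL(V)$ with $c(z\otimes x_j)=x_j\otimes g_j(z)$ for all $j$ and $z\in V$ (the bases for left and right need not coincide). $(V,c)$ is of diagonal type with respect to a basis $[x_1,\ldots,x_n]$ if $c(x_i\otimes x_j)=q_{ij}\,x_j\otimes x_i$ for some scalars $q_{ij}$, and it is diagonalizable if there exists a basis of $V$ with respect to which it is of diagonal type. *)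

From HB Require Import structures.
From mathcomp Require Import all_boot all_order all_algebra.
From mathcomp Require Import reals complex.
Set Implicit Arguments. Unset Strict Implicit. Unset Printing Implicit Defensive.
Import Order.TTheory GRing.Theory Num.Theory.
Local Open Scope ring_scope.

(* V = 'rV[F]_n (row vectors, standard basis e_0..e_{n-1}).
   V (x) V is represented by 'M[F]_n: the matrix t stands for
   \sum_{i,j} t i j e_i (x) e_j.
   V (x) V (x) V is represented by functions 'I_n -> 'I_n -> 'I_n -> F.
   A linear map c : V(x)V -> V(x)V is given by its coefficients
   c i j k l, meaning c(e_i (x) e_j) = \sum_{k,l} c i j k l e_k (x) e_l. *)

Definition tens2 (F : fieldType) (n : nat) (x z : 'rV[F]_n) : 'M[F]_n :=
  \matrix_(i, j) (x 0 i * z 0 j).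

Definition capp (F : fieldType) (n : nat)
  (c : 'I_n -> 'I_n -> 'I_n -> 'I_n -> F) (t : 'M[F]_n) : 'M[F]_n :=
  \matrix_(k, l) \sum_(i < n) \sum_(j < n) c i j k l * t i j.

(* c (x) Id_V *)
Definition c12 (F : fieldType) (n : nat)
  (c : 'I_n -> 'I_n -> 'I_n -> 'I_n -> F) (T : 'I_n -> 'I_n -> 'I_n -> F) :
  'I_n -> 'I_n -> 'I_n -> F :=
  fun p q r => \sum_(i < n) \sum_(j < n) c i j p q * T i j r.

(* Id_V (x) c *)
Definition c23 (F : fieldType) (n : nat)
  (c : 'I_n -> 'I_n -> 'I_n -> 'I_n -> F) (T : 'I_n -> 'I_n -> 'I_n -> F) :
  'I_n -> 'I_n -> 'I_n -> F :=
  fun p q r => \sum_(j < n) \sum_(k < n) c j k q r * T p j k.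

Definition bvs_braided (F : fieldType) (n : nat)
  (c : 'I_n -> 'I_n -> 'I_n -> 'I_n -> F) : Prop :=
  (exists d : 'I_n -> 'I_n -> 'I_n -> 'I_n -> F,
      forall t : 'M[F]_n, capp d (capp c t) = t /\ capp c (capp d t) = t) /\
  (forall T : 'I_n -> 'I_n -> 'I_n -> F,
      c12 c (c23 c (c12 c T)) = c23 c (c12 c (c23 c T))).

(* An ordered basis [x_1..x_n] of V is the list of rows of an invertible
   matrix B (x_i = row i B); elements of GL(V) are invertible matrices g
   acting on row vectors by z |-> z *m g. *)
Definition bvs_left_group_type (F : fieldType) (n : nat)
  (c : 'I_n -> 'I_n -> 'I_n -> 'I_n -> F) : Prop :=
  exists (B : 'M[F]_n) (g : 'I_n -> 'M[F]_n),
    B \in unitmx /\ (forall i, g i \in unitmx) /\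
    forall (i : 'I_n) (z : 'rV[F]_n),
      capp c (tens2 (row i B) z) = tens2 (z *m g i) (row i B).

Definition bvs_right_group_type (F : fieldType) (n : nat)
  (c : 'I_n -> 'I_n -> 'I_n -> 'I_n -> F) : Prop :=
  exists (B : 'M[F]_n) (g : 'I_n -> 'M[F]_n),
    B \in unitmx /\ (forall j, g j \in unitmx) /\
    forall (j : 'I_n) (z : 'rV[F]_n),
      capp c (tens2 z (row j B)) = tens2 (row j B) (z *m g j).

Definition bvs_diagonal_type (F : fieldType) (n : nat)
  (c : 'I_n -> 'I_n -> 'I_n -> 'I_n -> F) (B : 'M[F]_n) : Prop :=
  exists q : 'I_n -> 'I_n -> F,
    forall i j : 'I_n,
      capp c (tens2 (row i B) (row j B)) = q i j *: tens2 (row j B) (row i B).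

Definition bvs_diagonalizable (F : fieldType) (n : nat)
  (c : 'I_n -> 'I_n -> 'I_n -> 'I_n -> F) : Prop :=
  exists B : 'M[F]_n, B \in unitmx /\ bvs_diagonal_type c B.

From mathcomp Require Import all_boot all_order all_algebra.
From mathcomp Require Import reals complex.
From mathcomp Require Import ring.
From Stdlib Require Import FunctionalExtensionality.
Set Implicit Arguments. Unset Strict Implicit. Unset Printing Implicit Defensive.
Import GRing.Theory.
Local Open Scope ring_scope.

(* If c is diagonal in a basis (b_i), then c(b_i (x) z) = g_i(z) (x) b_i with g_i
   diagonal in (b_j) with eigenvalues q_ij, which are nonzero because c is
   invertible; symmetrically on the right.  Conversely, comparing the left and
   right expressions of c(x_i (x) y_j) gives g_i(y_j) = q_ij y_j and
   h_j(x_i) = q_ij x_i, so each g_i is diagonal in (y_j), each h_j in (x_i), and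
   the braid relation on x_i (x) x_k (x) y_j forces g_i h_j = h_j g_i.  The
   commuting family of all g_i and h_j has a common eigenbasis (p_k), and
   c(z (x) p_l) = p_l (x) h_m(z) for any m such that p_l has a nonzero
   y_m-coordinate; hence c(p_k (x) p_l) is a multiple of p_l (x) p_k. *)

Section Eigenbases.
Variables (F : fieldType) (n : nat).
Implicit Types (B M N : 'M[F]_n) (d e : 'I_n -> F) (w : 'rV[F]_n).

Lemma row_unitmx_neq0 B i : B \in unitmx -> row i B != 0.
Proof.
move=> Bu; apply/eqP => Bi0.
have : (delta_mx 0 i : 'rV_n) *m B *m invmx B = delta_mx 0 i by rewrite mulmxK.
rewrite -rowE Bi0 mul0mx => /matrixP /(_ 0 i); rewrite !mxE !eqxx /=.
by move/eqP; rewrite eq_sym oner_eq0.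
Qed.

Lemma rV_neq0_entry w : w != 0 -> exists k, w 0 k != 0.
Proof.
move=> w_neq0; apply/existsP; apply: contraR w_neq0 => /existsPn w0.
by apply/eqP/rowP => k; rewrite mxE; apply/eqP/negbNE/w0.
Qed.

Lemma rows_eigenP B M d :
  (forall j, row j B *m M = d j *: row j B) <->
  B *m M = diag_mx (\row_j d j) *m B.
Proof.
have row_diagB j : row j (diag_mx (\row_j d j) *m B) = d j *: row j B.
  by apply/rowP => k; rewrite mul_diag_mx !mxE.
rewrite -row_matrixP; split=> BM j; first by rewrite row_mul row_diagB BM.
by rewrite -row_diagB -BM row_mul.
Qed.

Lemma similar_diag_rowsP B M : B \in unitmx ->
  similar_diag B M <->
  exists d : 'I_n -> F, forall j, row j B *m M = d j *: row j B.
Proof.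
move=> Bu; split=> [/similar_diagPex [d /(similarP Bu) BM]|[d /rows_eigenP BM]].
  exists (d 0); apply/rows_eigenP.
  by rewrite BM; congr (diag_mx _ *m B); apply/rowP => j; rewrite mxE.
by apply/similar_diagPex; exists (\row_j d j); apply/(similarP Bu).
Qed.

Lemma rows_eigen_comm B M N d e : B \in unitmx ->
  (forall j, row j B *m M = d j *: row j B) ->
  (forall j, row j B *m N = e j *: row j B) -> comm_mx M N.
Proof.
move=> Bu BM BN; apply: (@row_full_inj _ _ _ _ B); first by rewrite row_full_unit.
apply/row_matrixP => i.
by rewrite !row_mul !mulmxA BM BN -!scalemxAl BM BN !scalerA mulrC.
Qed.

Lemma eigenvalue_coord B M d w l m : B \in unitmx ->
  (forall j, row j B *m M = d j *: row j B) -> w *m M = l *: w ->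
  (w *m invmx B) 0 m != 0 -> l = d m.
Proof.
move=> Bu /rows_eigenP BM wM.
set b := w *m invmx B; have wE : w = b *m B by rewrite mulmxKV.
have Bfree : row_free B by rewrite row_free_unit.
have : b *m diag_mx (\row_j d j) *m B = (l *: b) *m B.
  by rewrite -mulmxA -BM mulmxA -wE wM wE scalemxAl.
move/(row_free_inj Bfree)/rowP/(_ m); rewrite mul_mx_diag !mxE => bm bm_neq0.
by apply: (mulfI bm_neq0); rewrite mulrC bm.
Qed.

Definition diag_mx_in B d := invmx B *m diag_mx (\row_j d j) *m B.

Lemma row_diag_mx_in B d j : B \in unitmx ->
  row j B *m diag_mx_in B d = d j *: row j B.
Proof.
move=> Bu; apply/rows_eigenP: j.
by rewrite /diag_mx_in !mulmxA mulmxV // mul1mx.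
Qed.

Lemma diag_mx_in_unit B d : B \in unitmx -> (forall j, d j != 0) ->
  diag_mx_in B d \in unitmx.
Proof.
move=> Bu d_neq0; rewrite !unitmx_mul unitmx_inv Bu andbT /= unitmxE det_diag.
by rewrite unitfE; apply/prodf_neq0 => j _; rewrite mxE.
Qed.

Lemma linear_eq_on_basis (V : lmodType F) (f1 f2 : 'rV[F]_n -> V) B :
  linear f1 -> linear f2 -> B \in unitmx ->
  (forall j, f1 (row j B) = f2 (row j B)) -> f1 =1 f2.
Proof.
move=> Lf1 Lf2 Bu f12 z; rewrite -[z](mulmxKV Bu) mulmx_sum_row.
apply: (big_rec2 (fun y1 y2 => f1 y1 = f2 y2)) => [|i y1 y2 _ IH].
  by rewrite -[0 in LHS](subrr 0) -[0 in RHS](subrr 0)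
     (zmod_morphism_linear Lf1) (zmod_morphism_linear Lf2) !subrr.
by rewrite Lf1 Lf2 /= IH f12.
Qed.

End Eigenbases.

Section Tensors.
Variables (F : fieldType) (n : nat).
Implicit Types (a b e x z : 'rV[F]_n) (g : 'M[F]_n).

Lemma tens2Zl k a b : tens2 (k *: a) b = k *: tens2 a b.
Proof. by apply/matrixP => i j; rewrite !mxE mulrA. Qed.

Lemma tens2Zr k a b : tens2 a (k *: b) = k *: tens2 a b.
Proof. by apply/matrixP => i j; rewrite !mxE mulrCA. Qed.

Lemma tens2_neq0 a b : a != 0 -> b != 0 -> tens2 a b != 0.
Proof.
move=> /rV_neq0_entry [k ak] /rV_neq0_entry [l bl].
apply: contraNneq (mulf_neq0 ak bl) => /matrixP /(_ k l).
by rewrite !mxE => ->.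
Qed.

Lemma tens2_inj a b (a' b' : 'rV[F]_n) :
  tens2 a b = tens2 a' b' -> b != 0 -> a' != 0 ->
  exists k, a = k *: a' /\ b' = k *: b.
Proof.
move=> ab_a'b' /rV_neq0_entry [l bl] /rV_neq0_entry [p a'p].
have coef i j : a 0 i * b 0 j = a' 0 i * b' 0 j.
  by move/matrixP: ab_a'b' => /(_ i j); rewrite !mxE.
exists (b' 0 l / b 0 l); split; apply/rowP => i; rewrite !mxE.
  by apply: (mulIf bl); rewrite coef; field.
have ap : a 0 p = a' 0 p * b' 0 l / b 0 l by rewrite -coef; field.
by apply: (mulfI a'p); rewrite -coef ap; field.
Qed.

Variable c : 'I_n -> 'I_n -> 'I_n -> 'I_n -> F.

Lemma capp0 : capp c 0 = 0.
Proof.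
apply/matrixP => k l; rewrite !mxE big1 // => i _.
by rewrite big1 // => j _; rewrite mxE mulr0.
Qed.

Lemma capp_is_linear : linear (capp c).
Proof.
move=> k t s; apply/matrixP => p q; rewrite !mxE big_distrr -big_split /=.
apply: eq_bigr => i _; rewrite big_distrr -big_split /=.
by apply: eq_bigr => j _; rewrite !mxE mulrDr mulrCA.
Qed.

Lemma capp_tens2l_linear x : linear (fun z => capp c (tens2 x z)).
Proof.
move=> k z z'; rewrite -capp_is_linear; congr capp.
by apply/matrixP => i j; rewrite !mxE mulrDr mulrCA.
Qed.

Lemma capp_tens2r_linear x : linear (fun z => capp c (tens2 z x)).
Proof.
move=> k z z'; rewrite -capp_is_linear; congr capp.
by apply/matrixP => i j; rewrite !mxE mulrDl mulrA.
Qed.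

Lemma tens2_mulmxl_linear g x : linear (fun z => tens2 (z *m g) x).
Proof.
move=> k z z'; rewrite mulmxDl -scalemxAl.
by apply/matrixP => i j; rewrite !mxE mulrDl mulrA.
Qed.

Lemma tens2_mulmxr_linear g x : linear (fun z => tens2 x (z *m g)).
Proof.
move=> k z z'; rewrite mulmxDl -scalemxAl.
by apply/matrixP => i j; rewrite !mxE mulrDr mulrCA.
Qed.

Definition tens3 a b e : 'I_n -> 'I_n -> 'I_n -> F :=
  fun p q r => a 0 p * b 0 q * e 0 r.

Lemma tens3ZlZr k a b e : tens3 (k *: a) b e = tens3 a b (k *: e).
Proof.
apply: functional_extensionality => p; apply: functional_extensionality => q.
by apply: functional_extensionality => r; rewrite /tens3 !mxE; ring.
Qed.

Lemma tens3_inj_mid a b (b' : 'rV[F]_n) e : a != 0 -> e != 0 ->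
  tens3 a b e = tens3 a b' e -> b = b'.
Proof.
move=> /rV_neq0_entry [p ap] /rV_neq0_entry [r er] abe; apply/rowP => q.
apply: (mulfI (mulf_neq0 ap er)).
have := congr1 (fun T => T p q r) abe; rewrite /tens3 => abe_pqr.
by rewrite mulrAC abe_pqr mulrAC.
Qed.

Lemma c12_tens3 a b e (a' b' : 'rV[F]_n) :
  capp c (tens2 a b) = tens2 a' b' -> c12 c (tens3 a b e) = tens3 a' b' e.
Proof.
move=> /matrixP ab; apply: functional_extensionality => p.
apply: functional_extensionality => q; apply: functional_extensionality => r.
have := ab p q; rewrite !mxE /c12 /tens3 => <-.
rewrite big_distrl; apply: eq_bigr => i _; rewrite big_distrl.
by apply: eq_bigr => j _; rewrite mxE mulrA.
Qed.

Lemma c23_tens3 a b e (b' e' : 'rV[F]_n) :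
  capp c (tens2 b e) = tens2 b' e' -> c23 c (tens3 a b e) = tens3 a b' e'.
Proof.
move=> /matrixP be; apply: functional_extensionality => p.
apply: functional_extensionality => q; apply: functional_extensionality => r.
have := be q r; rewrite !mxE /c23 /tens3 => be_qr.
rewrite -mulrA -be_qr big_distrr; apply: eq_bigr => i _; rewrite big_distrr.
by apply: eq_bigr => j _; rewrite mxE /=; ring.
Qed.

End Tensors.

Section BraidedGroupType.
Variables (F : fieldType) (n : nat) (c : 'I_n -> 'I_n -> 'I_n -> 'I_n -> F).
Hypothesis cbr : bvs_braided c.

Lemma braided_capp_eq0 t : capp c t = 0 -> t = 0.
Proof. by case: cbr => -[d cd] _ ct0; rewrite -(cd t).1 ct0 capp0. Qed.

Lemma diagonal_type_coef_neq0 B q i j : B \in unitmx ->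
  capp c (tens2 (row i B) (row j B)) = q *: tens2 (row j B) (row i B) -> q != 0.
Proof.
move=> Bu cB; have := tens2_neq0 (row_unitmx_neq0 i Bu) (row_unitmx_neq0 j Bu).
apply: contraNneq => q0; apply/eqP; apply: braided_capp_eq0.
by rewrite cB q0 scale0r.
Qed.

Section DiagonalType.
Variables (B : 'M[F]_n) (q : 'I_n -> 'I_n -> F).
Hypotheses (Bu : B \in unitmx) (q_neq0 : forall i j, q i j != 0).
Hypothesis cB : forall i j,
  capp c (tens2 (row i B) (row j B)) = q i j *: tens2 (row j B) (row i B).

Lemma diagonal_type_left_group_type : bvs_left_group_type c.
Proof.
exists B, (fun i => diag_mx_in B (q i)); split=> //; split.
  by move=> i; apply: diag_mx_in_unit.
move=> i; apply: (linear_eq_on_basis (capp_tens2l_linear c _)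
  (tens2_mulmxl_linear _ _) Bu) => j.
by rewrite cB row_diag_mx_in // tens2Zl.
Qed.

Lemma diagonal_type_right_group_type : bvs_right_group_type c.
Proof.
exists B, (fun j => diag_mx_in B (q^~ j)); split=> //; split.
  by move=> j; apply: diag_mx_in_unit.
move=> j; apply: (linear_eq_on_basis (capp_tens2r_linear c _)
  (tens2_mulmxr_linear _ _) Bu) => i.
by rewrite cB row_diag_mx_in // tens2Zr.
Qed.

End DiagonalType.

Lemma diagonalizable_group_type :
  bvs_diagonalizable c -> bvs_left_group_type c /\ bvs_right_group_type c.
Proof.
move=> [B [Bu [q cB]]].
have q_neq0 i j : q i j != 0 := diagonal_type_coef_neq0 Bu (cB i j).
split; [exact: diagonal_type_left_group_type Bu q_neq0 cB
       | exact: diagonal_type_right_group_type Bu q_neq0 cB].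
Qed.

Section GroupType.
Variables (X Y : 'M[F]_n) (g h : 'I_n -> 'M[F]_n).
Hypotheses (Xu : X \in unitmx) (Yu : Y \in unitmx).
Hypothesis cX : forall i z,
  capp c (tens2 (row i X) z) = tens2 (z *m g i) (row i X).
Hypothesis cY : forall j z,
  capp c (tens2 z (row j Y)) = tens2 (row j Y) (z *m h j).

(* [c (x_i (x) y_j)] has the two rank-one expressions given by [cX] and [cY]. *)
Lemma group_type_scalars : exists q : 'I_n -> 'I_n -> F, forall i j,
  row j Y *m g i = q i j *: row j Y /\ row i X *m h j = q i j *: row i X.
Proof.
have qij i j : exists k,
    row j Y *m g i = k *: row j Y /\ row i X *m h j = k *: row i X.
  have := cX i (row j Y); rewrite cY => /esym/tens2_inj.
  by apply; exact: row_unitmx_neq0.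
exact: fin_all_exists (fun i => fin_all_exists (qij i)).
Qed.

Section Scalars.
Variable q : 'I_n -> 'I_n -> F.
Hypothesis hu : forall j, h j \in unitmx.
Hypothesis gY : forall i j, row j Y *m g i = q i j *: row j Y.
Hypothesis hX : forall i j, row i X *m h j = q i j *: row i X.

Lemma group_type_scalar_neq0 i j : q i j != 0.
Proof.
apply: contraNneq (row_unitmx_neq0 i Xu) => q0.
by rewrite -[row i X](mulmxK (hu j)) hX q0 scale0r mul0mx.
Qed.

(* Apply the braid relation to [x_i (x) x_k (x) y_j]. *)
Lemma group_type_comm i j : g i *m h j = h j *m g i.
Proof.
case: cbr => _ braid.
apply: (@row_full_inj _ _ _ _ X); first by rewrite row_full_unit.
apply/row_matrixP => k; rewrite !row_mul !mulmxA.
have := braid (tens3 (row i X) (row k X) (row j Y)).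
rewrite (c12_tens3 _ (cX i _)) (c23_tens3 _ (cY j _)) (c12_tens3 _ (cY j _)).
rewrite (c23_tens3 _ (cY j _)) (c12_tens3 _ (cX i _)) (c23_tens3 _ (cX i _)).
rewrite gY hX tens3ZlZr; apply: tens3_inj_mid; first exact: row_unitmx_neq0.
by rewrite scaler_eq0 negb_or group_type_scalar_neq0 row_unitmx_neq0.
Qed.

Lemma group_type_common_eigenbasis : exists2 P, P \in unitmx &
  (forall i, similar_diag P (g i)) /\ (forall j, similar_diag P (h j)).
Proof.
pose As := [seq g i | i <- enum 'I_n] ++ [seq h j | j <- enum 'I_n].
have As_cases A : A \in As -> (exists i, A = g i) \/ (exists j, A = h j).
  by rewrite mem_cat => /orP[/mapP[i _ ->]|/mapP[j _ ->]]; [left|right]; eexists.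
have hX' j m : row m X *m h j = q m j *: row m X := hX m j.
have [P Pu /allP PAs] : codiagonalizable As.
  apply/codiagonalizableP; split.
    move=> A1 A2 /As_cases[][k ->] /As_cases[][l ->].
    - exact: rows_eigen_comm Yu (gY k) (gY l).
    - exact: group_type_comm.
    - exact/esym/group_type_comm.
    - exact: rows_eigen_comm Xu (hX' k) (hX' l).
  move=> A /As_cases[][k ->].
    by exists Y => //; apply/(similar_diag_rowsP _ Yu); exists (q k).
  by exists X => //; apply/(similar_diag_rowsP _ Xu); exists (q^~ k).
exists P => //; split=> k; apply: PAs; rewrite mem_cat map_f ?mem_enum ?orbT //.
Qed.

(* For [m] with a nonzero [y_m]-coordinate of [w], the eigenvalue of [g i] on
   [w] is [q i m]. *)
Lemma braiding_common_eigenvector w : w != 0 ->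
  (forall i, exists l, w *m g i = l *: w) ->
  exists m, forall z, capp c (tens2 z w) = tens2 w (z *m h m).
Proof.
move=> w_neq0 w_eigen.
have [m wm] : exists m, (w *m invmx Y) 0 m != 0.
  apply: rV_neq0_entry; apply: contraNneq w_neq0 => w0.
  by rewrite -(mulmxKV Yu w) w0 mul0mx.
exists m; apply: (linear_eq_on_basis (capp_tens2r_linear c w)
  (tens2_mulmxr_linear _ w) Xu) => i.
have [l wl] := w_eigen i.
by rewrite cX wl (eigenvalue_coord Yu (gY i) wl wm) hX tens2Zl tens2Zr.
Qed.

Lemma group_type_diagonalizable_of_scalars : bvs_diagonalizable c.
Proof.
have [P Pu [Pg Ph]] := group_type_common_eigenbasis.
suff cP k l : exists r,
    capp c (tens2 (row k P) (row l P)) = r *: tens2 (row l P) (row k P).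
  by exists P; split=> //; exact: fin_all_exists (fun k => fin_all_exists (cP k)).
have [m cm] : exists m,
    forall z, capp c (tens2 z (row l P)) = tens2 (row l P) (z *m h m).
  apply: braiding_common_eigenvector; first exact: row_unitmx_neq0.
  by move=> i; have [d Pd] := (similar_diag_rowsP _ Pu).1 (Pg i); exists (d l).
have [d Pd] := (similar_diag_rowsP _ Pu).1 (Ph m).
by exists (d k); rewrite cm Pd tens2Zr.
Qed.

End Scalars.
End GroupType.

Lemma group_type_diagonalizable :
  bvs_left_group_type c -> bvs_right_group_type c -> bvs_diagonalizable c.
Proof.
move=> [X [g [Xu [_ cX]]]] [Y [h [Yu [hu cY]]]].
have [q qgh] := group_type_scalars Xu Yu cX cY.
apply: (group_type_diagonalizable_of_scalars Xu Yu cX cY hu (q := q)) => i j;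
  [exact: (qgh i j).1 | exact: (qgh i j).2].
Qed.

End BraidedGroupType.

Theorem lemma3p2 (R : realType) (n : nat)
  (c : 'I_n -> 'I_n -> 'I_n -> 'I_n -> R[i]) :
  bvs_braided c ->
  (bvs_left_group_type c /\ bvs_right_group_type c <-> bvs_diagonalizable c).
Proof.
move=> cbr; split=> [[cl cr]|]; first exact: group_type_diagonalizable.
exact: diagonalizable_group_type.
Qed.
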